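(* Let $\{X_i\}_{i\ge1}$ be i.i.d. symmetric random variables with $P(X_1=0)=0$, belonging to the domain of attraction of the $N(0,1)$ distribution, and let $V_j=(\sum_{i=1}^j X_i^2)^{1/2}$. Then for all integers $1\le j<k$, \[ E\Big(\frac{X_{j+1}^2}{V_{j+1}^2}\,\frac{X_{k+1}^2}{V_{k+1}^2}\Big)=\frac{1}{(j+1)(k+1)}. \]
   Context: A random variable $X$ is in the domain of attraction of $N(0,1)$ if there exist constants $a_n>0$ such that $(X_1+\cdots+X_n)/a_n$ converges in distribution to $N(0,1)$ for i.i.d. copies $X_i$ of $X$. *)

From HB Require Import structures.
From mathcomp Require Import all_boot all_order all_algebra.
From mathcomp Require Import all_classical all_reals all_analysis.
Set Implicit Arguments. Unset Strict Implicit. Unset Printing Implicit Defensive.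
Import Order.TTheory GRing.Theory Num.Theory.
Import numFieldNormedType.Exports.
Local Open Scope classical_set_scope.
Local Open Scope ring_scope.

Definition mutually_independent d (T : measurableType d) (R : realType)
    (P : probability T R) (X : nat -> {RV P >-> R}) : Prop :=
  forall (s : seq nat) (B : nat -> set R),
    uniq s -> (forall i, measurable (B i)) ->
    P (\bigcap_(i in [set` s]) (X i @^-1` B i)) =
    (\prod_(i <- s) P (X i @^-1` B i))%E.

Definition identically_distributed d (T : measurableType d) (R : realType)
    (P : probability T R) (X : nat -> {RV P >-> R}) : Prop :=
  forall i (B : set R), measurable B ->
    P (X i @^-1` B) = P (X 0%N @^-1` B).

Definition iid d (T : measurableType d) (R : realType)
    (P : probability T R) (X : nat -> {RV P >-> R}) : Prop :=
  mutually_independent X /\ identically_distributed X.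

Definition symmetric_rv d (T : measurableType d) (R : realType)
    (P : probability T R) (Y : {RV P >-> R}) : Prop :=
  forall B : set R, measurable B ->
    P (Y @^-1` B) = P ((fun w => - Y w) @^-1` B).

(* Convergence in distribution of a sequence of real-valued (measurable)
   functions to the standard normal law N(0,1): pointwise convergence of the
   distribution functions (N(0,1) has a continuous cdf, so every point is a
   continuity point). *)
Definition cvg_in_distribution_to_std_normal d (T : measurableType d)
    (R : realType) (P : probability T R) (Z : nat -> T -> R) : Prop :=
  forall x : R,
    (fun n => fine (P [set w | Z n w <= x])) @ \oo -->
      fine (normal_prob 0 1 `]-oo, x]).

(* Domain of attraction of N(0,1) for the common law of the i.i.d. sequence X
   (X 0, X 1, ... are the i.i.d. copies X_1, X_2, ...): there are constants
   a_n > 0 with (X_1 + ... + X_n)/a_n converging in distribution to N(0,1). *)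
Definition in_domain_of_attraction_std_normal d (T : measurableType d)
    (R : realType) (P : probability T R) (X : nat -> {RV P >-> R}) : Prop :=
  exists a : nat -> R, (forall n, 0 < a n) /\
    cvg_in_distribution_to_std_normal P
      (fun n w => (\sum_(i < n) X i w) / a n).

(* V_j^2 = sum_{i=1}^j X_i^2  (paper indexing; X_i is X (i-1) here). *)
Definition Vsq d (T : measurableType d) (R : realType)
    (P : probability T R) (X : nat -> {RV P >-> R}) (j : nat) (w : T) : R :=
  \sum_(i < j) (X i w) ^+ 2.

From HB Require Import structures.
From mathcomp Require Import all_boot all_order all_algebra.
From mathcomp Require Import all_classical all_reals all_analysis.
From mathcomp Require Import measurable_realfun perm.
Set Implicit Arguments. Unset Strict Implicit. Unset Printing Implicit Defensive.
Import Order.TTheory GRing.Theory Num.Theory.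
Local Open Scope classical_set_scope.
Local Open Scope ring_scope.

(* An i.i.d. sequence is exchangeable, and the ratios X_a^2 / V_m^2, a <= m,
   sum to 1 wherever V_m > 0, i.e. almost surely since P(X_1 = 0) = 0.  Hence
   m E[X_a^2 / V_m^2 * g] = E[g] for every weight g >= 0 invariant under
   permutations of the first m coordinates.  Taking g = 1, m = k+1 gives
   E[X_{k+1}^2 / V_{k+1}^2] = 1/(k+1); taking g = X_{k+1}^2 / V_{k+1}^2,
   m = j+1 then gives the claim. *)

Definition box (R : Type) n (B : 'I_n -> set R) : set (n.-tuple R) :=
  [set t | forall i, B i (tnth t i)].

Section box_sigma_algebra.
Context (R : realType) (n : nat).

Definition boxes : set (set (n.-tuple R)) :=
  [set A | exists2 B : 'I_n -> set R, (forall i, measurable (B i)) & A = box B].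

Lemma measurable_box (B : 'I_n -> set R) :
  (forall i, measurable (B i)) -> measurable (box B).
Proof.
move=> mB; have -> : box B = \bigcap_(i in [set: 'I_n]) (@tnth n R ^~ i @^-1` B i).
  by apply/seteqP; split => t /= h i; [move=> _|]; exact: h.
apply: fin_bigcap_measurable; first exact: finite_finset.
by move=> i _; rewrite -[X in measurable X]setTI; exact: measurable_tnth.
Qed.

Lemma tuple_measurableE : measurable = <<s boxes >>.
Proof.
apply/seteqP; split; last first.
  apply: smallest_sub; first exact: sigma_algebra_measurable.
  by move=> A [B mB ->]; exact: measurable_box.
apply: smallest_sub; first exact: smallest_sigma_algebra.
apply: (big_ind (fun X => X `<=` <<s boxes >>)) => //.
  by move=> A B hA hB C [/hA|/hB].
move=> i _ A [C mC <-]; apply: sub_sigma_algebra.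
exists (fun l => if l == i then C else setT); first by move=> l; case: ifP.
apply/seteqP; split => t /=; first by move=> [_ h] l; case: eqP => [->|].
by move=> h; split => //; have := h i; rewrite eqxx.
Qed.

End box_sigma_algebra.

Section rv_tuple.
Context d (T : measurableType d) (R : realType) (P : probability T R)
  (X : nat -> {RV P >-> R}) (n : nat).

Definition rv_tuple (s : 'I_n -> nat) (w : T) : n.-tuple R :=
  [tuple X (s i) w | i < n].

Lemma measurable_rv_tuple s : measurable_fun setT (rv_tuple s).
Proof.
apply/measurable_fun_tnthP => i; rewrite /comp /rv_tuple.
under eq_fun do rewrite tnth_mktuple.
exact: measurable_funPT.
Qed.

HB.instance Definition _ s :=
  isMeasurableFun.Build _ _ _ _ (rv_tuple s) (measurable_rv_tuple s).

Hypothesis X_iid : iid X.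

Lemma probability_rv_tuple_box s (B : 'I_n -> set R) :
  injective s -> (forall i, measurable (B i)) ->
  P (rv_tuple s @^-1` box B) = (\prod_(i < n) P (X 0%N @^-1` B i))%E.
Proof.
move=> s_inj mB; have [X_indep X_id] := X_iid.
pose B' (m : nat) : set R := if [pick i | s i == m] is Some i then B i else setT.
have B'E i : B' (s i) = B i.
  rewrite /B'; case: pickP => [j /eqP /s_inj -> //|/(_ i)]; by rewrite eqxx.
have mB' m : measurable (B' m) by rewrite /B'; case: pickP.
have := @X_indep (map s (index_enum 'I_n)) B'.
rewrite map_inj_uniq // index_enum_uniq => /(_ isT mB').
have -> : \bigcap_(m in [set` map s (index_enum 'I_n)]) X m @^-1` B' m
          = rv_tuple s @^-1` box B.
  apply/seteqP; split => w /=.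
    move=> h i; rewrite tnth_mktuple -B'E; apply: h => /=.
    by apply/mapP; exists i => //; rewrite mem_index_enum.
  by move=> h m /= /mapP [i _ ->]; rewrite B'E; have := h i; rewrite tnth_mktuple.
by move=> ->; rewrite big_map; apply: eq_bigr => i _; rewrite B'E X_id.
Qed.

Lemma distribution_rv_tuple_inj (s1 s2 : 'I_n -> nat) :
  injective s1 -> injective s2 -> forall A, measurable A ->
  distribution P (rv_tuple s1) A = distribution P (rv_tuple s2) A.
Proof.
move=> s1_inj s2_inj.
(* Boxes are a pi-system generating the product sigma-algebra, and both laws
   give a box the product of its marginal probabilities. *)
apply: (measure_unique (@boxes R n) (fun _ => setT)).
- exact: tuple_measurableE.
- move=> _ _ [B1 mB1 ->] [B2 mB2 ->].
  exists (fun i => B1 i `&` B2 i); first by move=> i; exact: measurableI.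
  by apply/seteqP; split => t /=;
    [move=> [h1 h2] i; split|move=> h; split => i; case: (h i)].
- by move=> _; exists (fun _ => setT) => //; apply/seteqP; split.
- by apply/seteqP; split => // t _; exists 0%N.
- move=> _ [B mB ->]; rewrite /distribution /pushforward /=.
  exact: etrans (probability_rv_tuple_box s1_inj mB)
    (esym (probability_rv_tuple_box s2_inj mB)).
- by move=> _; apply: (le_lt_trans (probability_le1 _ measurableT)); exact: ltry.
Qed.

Lemma integral_rv_tuple_inj (s1 s2 : 'I_n -> nat) (h : n.-tuple R -> \bar R) :
  injective s1 -> injective s2 ->
  measurable_fun [set: n.-tuple R] h -> (forall t, (0 <= h t)%E) ->
  (\int[P]_w h (rv_tuple s1 w) = \int[P]_w h (rv_tuple s2 w))%E.
Proof.
move=> s1_inj s2_inj mh h0.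
rewrite -!(ge0_integral_distribution _ mh h0).
by apply: eq_measure_integral => A mA _; exact: distribution_rv_tuple_inj.
Qed.

Definition coords (w : T) (i : 'I_n) : R := X i w.

Lemma coords_comp (s : 'I_n -> 'I_n) w : coords w \o s = tnth (rv_tuple (val \o s) w).
Proof. by apply/funext => i; rewrite tnth_mktuple. Qed.

Lemma measurable_coords_fun (g : ('I_n -> R) -> R) :
  measurable_fun [set: n.-tuple R] (fun t => g (tnth t)) ->
  measurable_fun setT (fun w => g (coords w)).
Proof.
move=> mg; rewrite (_ : (fun w => _) = (fun t => g (tnth t)) \o rv_tuple val).
  exact: measurableT_comp.
by apply/funext => w; rewrite /= -(coords_comp id).
Qed.

Lemma integral_coords_perm (g : ('I_n -> R) -> R) (tau : {perm 'I_n}) :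
  measurable_fun [set: n.-tuple R] (fun t => g (tnth t)) -> (forall u, 0 <= g u) ->
  (\int[P]_w (g (coords w \o tau))%:E = \int[P]_w (g (coords w))%:E)%E.
Proof.
move=> mg g0.
transitivity (\int[P]_w (g (coords w \o id))%:E)%E; last by [].
under eq_integral do rewrite coords_comp.
under [RHS]eq_integral do rewrite coords_comp.
apply: (integral_rv_tuple_inj (h := fun t => (g (tnth t))%:E)) => //.
- by move=> x y /val_inj /perm_inj.
- exact/measurable_EFinP.
- by move=> t; rewrite lee_fin.
Qed.

End rv_tuple.

Section sum_of_squares.
Context (R : realFieldType) (n : nat).
Implicit Types (p : pred 'I_n) (u : 'I_n -> R) (tau : {perm 'I_n}).

Definition sumsq p u : R := \sum_(i < n | p i) u i ^+ 2.

Definition sqr_ratio p (a : 'I_n) u : R := u a ^+ 2 / sumsq p u.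

Lemma sumsq_ge0 p u : 0 <= sumsq p u.
Proof. by apply: sumr_ge0 => i _; exact: sqr_ge0. Qed.

Lemma sumsq_gt0 p u (i : 'I_n) : p i -> u i != 0 -> 0 < sumsq p u.
Proof.
move=> pi ui; rewrite /sumsq (bigD1 i) //=.
apply: ltr_pwDl; first by rewrite exprn_even_gt0 // ui orbT.
by apply: sumr_ge0 => l _; exact: sqr_ge0.
Qed.

Lemma sumsq_perm p u tau : (forall i, p (tau i) = p i) ->
  sumsq p (u \o tau) = sumsq p u.
Proof.
move=> p_tau; rewrite /sumsq [RHS](reindex_inj (@perm_inj _ tau)) /=.
by apply: eq_bigl => i; rewrite p_tau.
Qed.

Lemma sqr_ratio_perm p u tau (a : 'I_n) : (forall i, p (tau i) = p i) ->
  sqr_ratio p a (u \o tau) = sqr_ratio p (tau a) u.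
Proof. by move=> p_tau; rewrite /sqr_ratio sumsq_perm. Qed.

Lemma sqr_ratio_ge0 p (a : 'I_n) u : 0 <= sqr_ratio p a u.
Proof. by apply: divr_ge0; [exact: sqr_ge0|exact: sumsq_ge0]. Qed.

Lemma sum_sqr_ratio p u : sumsq p u != 0 -> \sum_(a < n | p a) sqr_ratio p a u = 1.
Proof. by move=> u_neq0; rewrite -big_distrl /= -/(sumsq p u) divff. Qed.

Lemma tperm_pred p (a b : 'I_n) : p a -> p b -> forall i, p (tperm a b i) = p i.
Proof. by move=> pa pb i; case: tpermP => [->|->|//]; rewrite pa pb. Qed.

End sum_of_squares.

Lemma measurable_inv (R : realType) : measurable_fun [set: R] (@GRing.inv R).
Proof.
rewrite -(setUv [set 0]); apply/measurable_funU => //; first exact: measurableC.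
split; first exact: measurable_fun_set1.
apply: open_continuous_measurable_fun.
  apply/closed_openC/accessible_closed_set1/hausdorff_accessible.
  exact: norm_hausdorff.
by move=> x; rewrite inE /= => /eqP x0; exact: inv_continuous.
Qed.

Section measurable_sqr_ratio.
Context (R : realType) (n : nat).

Lemma measurable_sumsq (p : pred 'I_n) :
  measurable_fun [set: n.-tuple R] (fun t => sumsq p (tnth t)).
Proof.
rewrite /sumsq; under eq_fun do rewrite -big_filter.
by apply: measurable_sum => i; apply: measurable_funX; exact: measurable_tnth.
Qed.

Lemma measurable_sqr_ratio (p : pred 'I_n) (a : 'I_n) :
  measurable_fun [set: n.-tuple R] (fun t => sqr_ratio p a (tnth t)).
Proof.
apply: measurable_funM; first by apply: measurable_funX; exact: measurable_tnth.
by apply: measurableT_comp; [exact: measurable_inv|exact: measurable_sumsq].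
Qed.

End measurable_sqr_ratio.

Section exchangeable_sqr_ratio.
Context d (T : measurableType d) (R : realType) (P : probability T R)
  (X : nat -> {RV P >-> R}) (n : nat).
Hypotheses (X_iid : iid X) (X0_neq0 : P (X 0%N @^-1` [set 0]) = 0%E).

Local Notation coords := (coords X).

Lemma integral_sqr_ratio_mul (p : pred 'I_n.+1) (a0 : 'I_n.+1)
    (g : ('I_n.+1 -> R) -> R) :
  p ord0 -> p a0 ->
  measurable_fun [set: n.+1.-tuple R] (fun t => g (tnth t)) -> (forall u, 0 <= g u) ->
  (forall a u, p a -> g (u \o tperm a a0) = g u) ->
  ((\int[P]_w (sqr_ratio p a0 (coords w) * g (coords w))%:E) *+ #|p|
   = \int[P]_w (g (coords w))%:E)%E.
Proof.
move=> p0 pa0 mg g0 g_perm.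
pose h a u := sqr_ratio p a u * g u.
have mh a : measurable_fun [set: n.+1.-tuple R] (fun t => h a (tnth t)).
  by apply: measurable_funM => //; exact: measurable_sqr_ratio.
have h0 a u : 0 <= h a u by apply: mulr_ge0 => //; exact: sqr_ratio_ge0.
have h_perm a : p a ->
    (\int[P]_w (h a (coords w))%:E = \int[P]_w (h a0 (coords w))%:E)%E.
  move=> pa; rewrite -(integral_coords_perm X_iid (tperm a a0) (mh a0)) //.
  apply: eq_integral => w _.
  by rewrite /h g_perm // sqr_ratio_perm ?tpermR //; exact: tperm_pred.
have sum_h w : X 0%N w != 0 -> \sum_(a < n.+1 | p a) h a (coords w) = g (coords w).
  move=> Xw0; rewrite -big_distrl /= sum_sqr_ratio ?mul1r //.
  by rewrite gt_eqF // (sumsq_gt0 (i := ord0)).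
transitivity (\int[P]_w (\sum_(a < n.+1 | p a) h a (coords w))%:E)%E; last first.
  apply: ae_eq_integral => //.
  - apply/measurable_EFinP.
    apply: (measurable_coords_fun X (g := fun u => \sum_(a < n.+1 | p a) h a u)).
    by under eq_fun do rewrite -big_filter; exact: measurable_sum.
  - exact/measurable_EFinP/measurable_coords_fun.
  exists (X 0%N @^-1` [set 0]); split => //.
  by move=> w /= hw; apply: contrapT => /eqP Xw0; apply: hw => _; rewrite sum_h.
under [RHS]eq_integral do rewrite -sumEFin -big_filter.
rewrite ge0_integral_sum //; last 2 first.
- by move=> a; exact/measurable_EFinP/measurable_coords_fun.
- by move=> a w _; rewrite lee_fin.
by rewrite big_filter (eq_bigr _ h_perm) sumr_const.
Qed.

End exchangeable_sqr_ratio.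

Lemma card_ord_lt n m : (m <= n)%N -> #|[pred i : 'I_n | (i < m)%N]| = m.
Proof.
by move=> mn; rewrite -sum1_card -(big_ord_widen n (fun=> 1%N) mn) sum1_card card_ord.
Qed.

Lemma enatmulS_eqEFin (R : realFieldType) (x : \bar R) n (r : R) :
  (x *+ n.+1 = r%:E)%E -> x = (r / n.+1%:R)%:E.
Proof.
case: x => [x||]; last 2 first.
- by rewrite enatmul_pinfty.
- by rewrite enatmul_ninfty.
rewrite -EFin_natmul => -[<-].
by rewrite -(mulr_natr x) mulfK // pnatr_eq0.
Qed.

Theorem lemma4p3 (d : measure_display) (T : measurableType d) (R : realType)
    (P : probability T R) (X : nat -> {RV P >-> R}) :
  iid X ->
  symmetric_rv (X 0%N) ->
  P (X 0%N @^-1` [set 0]) = 0%E ->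
  in_domain_of_attraction_std_normal X ->
  forall j k : nat, (1 <= j)%N -> (j < k)%N ->
    ('E_P[(fun w => (X j w ^+ 2 / Vsq X j.+1 w) * (X k w ^+ 2 / Vsq X k.+1 w))%R]
    = ((j.+1%:R * k.+1%:R)^-1)%:E)%E.
Proof.
move=> X_iid _ X0_neq0 _ j k _ jk.
have jk1 : (j.+1 <= k.+1)%N by rewrite ltnS ltnW.
pose pj := [pred i : 'I_k.+1 | (i < j.+1)%N].
pose J : 'I_k.+1 := Ordinal jk1.
pose ratio_k (u : 'I_k.+1 -> R) := sqr_ratio predT (@ord_max k) u.
have EE : ('E_P[fun w => (X j w ^+ 2 / Vsq X j.+1 w) * (X k w ^+ 2 / Vsq X k.+1 w)]%R
    = \int[P]_w (sqr_ratio pj J (coords X w) * ratio_k (coords X w))%:E)%E.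
  rewrite unlock; apply: eq_integral => w _.
  by rewrite /Vsq (big_ord_widen k.+1 (fun i => X i w ^+ 2) jk1).
have Ek : (\int[P]_w (ratio_k (coords X w))%:E)%E = (k.+1%:R^-1)%:E.
  have := integral_sqr_ratio_mul X_iid X0_neq0 (n := k) (p := predT) (a0 := ord_max)
    (g := fun=> 1) erefl erefl (measurable_cst _) (fun=> ler01) (fun _ _ _ => erefl).
  rewrite cardT size_enum_ord integral_cst //= mul1e probability_setT.
  under eq_integral do rewrite mulr1.
  by rewrite -div1r; exact: enatmulS_eqEFin.
have ratio_k_perm a u : pj a -> ratio_k (u \o tperm a J) = ratio_k u.
  move=> ja; rewrite /ratio_k sqr_ratio_perm // tpermD //.
  - by rewrite -val_eqE neq_ltn /= (leq_trans ja jk).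
  - by rewrite -val_eqE neq_ltn /= jk.
have := integral_sqr_ratio_mul X_iid X0_neq0 (p := pj) (a0 := J) erefl (ltnSn j)
  (measurable_sqr_ratio _ _) (sqr_ratio_ge0 _ _) ratio_k_perm.
rewrite card_ord_lt // Ek EE => /enatmulS_eqEFin ->.
by rewrite invfM mulrC.
Qed.
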